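(* Let $(\mathcal{X},c)$ be a metric space with diameter at most $1$, let $\mu,\nu$ be probability distributions on $\mathcal{X}$, and let $p\ge1$, $k>0$, $\delta'>0$. Suppose that for every $\alpha\in[0,1]$ a value $\overline W_{p,\alpha}(\mu,\nu)$ is given with $W_{p,\alpha}(\mu,\nu)\le\overline W_{p,\alpha}(\mu,\nu)\le W_{p,\alpha}(\mu,\nu)+\delta'$, and define $\overline{\mathrm{RPW}}_{p,k}(\mu,\nu)=\inf\{\varepsilon\in[0,1]: \overline W_{p,1-\varepsilon}(\mu,\nu)\le k\varepsilon\}$. Then $$\mathrm{RPW}_{p,k}(\mu,\nu)\le\overline{\mathrm{RPW}}_{p,k}(\mu,\nu)\le\mathrm{RPW}_{p,k}(\mu,\nu)+\tfrac{2\delta'}{k}.$$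
   Context: $c(x,y)\le1$ for all $x,y$; distributions are Borel probability measures. For $p\in[1,\infty)$ and $\alpha\in[0,1]$, a partial transport plan of mass $\alpha$ between $\mu,\nu$ is a nonnegative measure $\gamma$ on $\mathcal{X}\times\mathcal{X}$ of total mass $\alpha$ with first marginal $\le\mu$ and second marginal $\le\nu$ (setwise); its cost is $w_p(\gamma)=(\int c^p\,d\gamma)^{1/p}$, and $W_{p,\alpha}(\mu,\nu)$ is the infimum of $w_p(\gamma)$ over such $\gamma$. For $k\ge0$, $\mathrm{RPW}_{p,k}(\mu,\nu)=\inf\{\varepsilon\in[0,1]: W_{p,1-\varepsilon}(\mu,\nu)\le k\varepsilon\}$. *)

From HB Require Import structures.
From mathcomp Require Import all_boot all_order all_algebra.
From mathcomp Require Import all_classical all_reals all_analysis.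
Set Implicit Arguments. Unset Strict Implicit. Unset Printing Implicit Defensive.
Import Order.TTheory GRing.Theory Num.Theory.
Local Open Scope classical_set_scope.
Local Open Scope ring_scope.

Section RPW.
Context {d : measure_display} {X : measurableType d} {R : realType}.

Definition is_metric (c : X -> X -> R) : Prop :=
  (forall x y, c x y = 0 <-> x = y) /\
  (forall x y, c x y = c y x) /\
  (forall x y z, c x z <= c x y + c y z).

Definition metric_open (c : X -> X -> R) (A : set X) : Prop :=
  forall x, A x -> exists r : R, 0 < r /\ [set y | c x y < r] `<=` A.

Definition borel_wrt (c : X -> X -> R) : Prop :=
  (@measurable _ X) = <<s metric_open c >>.

Definition partial_plan (mu nu : probability X R) (alpha : R)
    (g : {measure set (X * X)%type -> \bar R}) : Prop :=
  g setT = alpha%:E /\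
  (forall A, measurable A -> g (A `*` setT) <= mu A)%E /\
  (forall B, measurable B -> g (setT `*` B) <= nu B)%E.

Definition plan_cost (c : X -> X -> R) (p : R)
    (g : {measure set (X * X)%type -> \bar R}) : R :=
  (fine (\int[g]_z ((c z.1 z.2) `^ p)%:E)) `^ p^-1.

Definition Wpa (c : X -> X -> R) (p alpha : R) (mu nu : probability X R) : R :=
  inf [set plan_cost c p g | g in [set g | partial_plan mu nu alpha g]].

(* inf { eps in [0,1] : W (1 - eps) <= k eps }, the infimum being taken in the
   complete lattice [0,1] (so the infimum of the empty set is 1). *)
Definition rpw_of (W : R -> R) (k : R) : R :=
  inf ([set e | 0 <= e <= 1 /\ W (1 - e) <= k * e] `|` [set 1]).

Definition RPW (c : X -> X -> R) (p k : R) (mu nu : probability X R) : R :=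
  rpw_of (fun a => Wpa c p a mu nu) k.

End RPW.

(** Replacing [W] by an over-estimate can only shrink the feasible set
    [{e | W (1 - e) <= k e}], whence the lower bound.  For the upper bound,
    the true [W_{p,a}] is nondecreasing in the mass [a] (scale a plan of mass
    [b] down to mass [a <= b]), so if [e] is feasible for [W] then
    [e + δ'/k] is feasible for [Wbar]:
    [Wbar (1 - e - δ'/k) <= W (1 - e - δ'/k) + δ' <= W (1 - e) + δ' <= k (e + δ'/k)].
    This gives the bound with [δ'/k], a fortiori with [2δ'/k]. *)

From HB Require Import structures.
From mathcomp Require Import all_boot all_order all_algebra.
From mathcomp Require Import all_classical all_reals all_analysis.
From mathcomp Require Import measurable_realfun lra.
Import Order.TTheory GRing.Theory Num.Theory.
Local Open Scope classical_set_scope.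
Local Open Scope ring_scope.

Section integral_mscale.
Context {d : measure_display} {T : measurableType d} {R : realType}.
Import HBNNSimple.

(* Unlike [ge0_integral_mscale], no measurability of [f] is required: both
   sides are suprema over the same nonnegative simple functions below [f]. *)
Lemma ge0_integralT_mscale (t : {nonneg R}) (m : {measure set T -> \bar R})
    (f : T -> \bar R) : (forall x, 0 <= f x)%E ->
  (\int[mscale t m]_(x in setT) f x = t%:num%:E * \int[m]_(x in setT) f x)%E.
Proof.
move=> f0; rewrite !ge0_integralTE// -ereal_supZl//; last first.
  by apply/set0P; exists (sintegral m (@nnsfun0 _ T R)); exists nnsfun0.
congr ereal_sup; rewrite image_comp; apply: eq_imagel => h _ /=.
have sintegralE (m' : {measure set T -> \bar R}) :
    sintegral m' h = (\int[m']_(x in setT) (h x)%:E)%E.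
  by rewrite integral_nnsfun// patch_setT.
rewrite !sintegralE ge0_integral_mscale//.
- by apply: measurableT_comp.
- by move=> x _; rewrite lee_fin.
Qed.

End integral_mscale.

Section partial_plans.
Context {d : measure_display} {X : measurableType d} {R : realType}.
Variables (mu nu : probability X R).

Lemma partial_plan_mscale_product (a : R) (a0 : 0 <= a) : a <= 1 ->
  partial_plan mu nu a (mscale (NngNum a0) (mu \x nu)%E).
Proof.
move=> a1; have muT : mu setT = 1%E by exact: probability_setT.
have nuT : nu setT = 1%E by exact: probability_setT.
split; [|split] => [|A mA|B mB]; rewrite /= /mscale /=.
- rewrite -setXTT product_measure1E//.
  have -> : (mu setT * nu setT = 1)%E by rewrite muT nuT mule1.
  by rewrite mule1.
- rewrite product_measure1E//.
  have -> : (mu A * nu setT = mu A)%E by rewrite nuT mule1.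
  by rewrite gee_pMl// lee_fin.
- rewrite product_measure1E//.
  have -> : (mu setT * nu B = nu B)%E by rewrite muT mul1e.
  by rewrite gee_pMl// lee_fin.
Qed.

Lemma partial_plan_mscale (a : R) (t : {nonneg R})
    (g : {measure set (X * X)%type -> \bar R}) : t%:num <= 1 ->
  partial_plan mu nu a g -> partial_plan mu nu (t%:num * a) (mscale t g).
Proof.
move=> t1 [gT [gA gB]]; split; [|split] => [|A mA|B mB]; rewrite /= /mscale /=.
- by rewrite gT.
- by apply: le_trans (gA A mA); rewrite gee_pMl// lee_fin.
- by apply: le_trans (gB B mB); rewrite gee_pMl// lee_fin.
Qed.

Lemma plan_cost_mscale_le (c : X -> X -> R) (p : R) (t : {nonneg R})
    (g : {measure set (X * X)%type -> \bar R}) : 0 <= p -> t%:num <= 1 ->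
  plan_cost c p (mscale t g) <= plan_cost c p g.
Proof.
move=> p0 t1; rewrite /plan_cost ge0_integralT_mscale; last first.
  by move=> z; rewrite lee_fin powR_ge0.
set I := (\int[g]_z _)%E.
have I0 : (0 <= I)%E by apply: integral_ge0 => z _; rewrite lee_fin powR_ge0.
apply: ge0_ler_powR; rewrite ?invr_ge0 ?nnegrE ?fine_ge0 ?mule_ge0//.
move: I0; case: I => [r| |] //= r0; first by rewrite ler_piMl.
have [->|t_gt0] := eqVneq t%:num 0; first by rewrite mul0e.
by rewrite gt0_muley// lte_fin lt0r t_gt0 /=.
Qed.

Lemma Wpa_mono (c : X -> X -> R) (p : R) : 0 <= p -> forall a b,
  0 <= a -> a <= b -> b <= 1 -> Wpa c p a mu nu <= Wpa c p b mu nu.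
Proof.
move=> p0 a b a0 ab b1; have b0 := le_trans a0 ab.
have [b_eq0|b_neq0] := eqVneq b 0.
  by have -> : a = b by apply/le_anti; rewrite ab b_eq0 a0.
apply: lb_le_inf.
  pose P := mscale (NngNum b0) (mu \x nu)%E.
  by exists (plan_cost c p P), P => //; exact: partial_plan_mscale_product.
move=> _ [g gb <-].
have ab0 : 0 <= a / b by rewrite divr_ge0.
have ab1 : a / b <= 1 by rewrite ler_pdivrMr ?mul1r// lt0r b_neq0.
apply: (le_trans _ (plan_cost_mscale_le c p (NngNum ab0) g p0 ab1)).
apply: ge_inf; first by exists 0 => _ [h _ <-]; exact: powR_ge0.
exists (mscale (NngNum ab0) g) => //.
by have := partial_plan_mscale _ (NngNum ab0) _ ab1 gb; rewrite /= mulfVK.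
Qed.

End partial_plans.

Section rpw_of.
Context {R : realType}.
Implicit Types (W V : R -> R) (k e r : R).

Lemma rpw_of_le1 W k : rpw_of W k <= 1.
Proof. by apply: ge_inf; [exists 0 => e [[/andP[]]|->]|right]. Qed.

Lemma rpw_of_le W k e : 0 <= e <= 1 -> W (1 - e) <= k * e -> rpw_of W k <= e.
Proof. by move=> e01 We; apply: ge_inf; [exists 0 => x [[/andP[]]|->]|left]. Qed.

Lemma le_rpw_of W V k : (forall a, 0 <= a <= 1 -> W a <= V a) ->
  rpw_of W k <= rpw_of V k.
Proof.
move=> WV; apply: lb_le_inf; first by exists 1; right.
move=> e [[/andP[e0 e1] We]|->]; last exact: rpw_of_le1.
by apply: rpw_of_le; [rewrite e0|apply: le_trans We; apply: WV; lra].
Qed.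

Lemma rpw_of_le_add W V k r : 0 < k -> 0 <= r ->
  (forall a b, 0 <= a -> a <= b -> b <= 1 -> W a <= W b) ->
  (forall a, 0 <= a <= 1 -> V a <= W a + r) ->
  rpw_of V k <= rpw_of W k + r / k.
Proof.
move=> k0 r0 Wmono VW; apply/ler_addgt0Pr => eps eps0.
have kr : k * (r / k) = r by rewrite mulrC divfK// gt_eqF.
have rk0 : 0 <= r / k by rewrite divr_ge0// ltW.
have [e [[/andP[e0 e1] We]|->] e_lt] : exists2 e,
    ([set e | 0 <= e <= 1 /\ W (1 - e) <= k * e] `|` [set 1]) e &
    e < rpw_of W k + eps.
  by apply: inf_lt; [exists 1; right|rewrite ltrDl].
- have [e_big|e_small] := leP 1 (e + r / k).
    by apply: le_trans (rpw_of_le1 V k) _; lra.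
  apply: (@le_trans _ _ (e + r / k)); last by lra.
  apply: rpw_of_le; first by apply/andP; split; lra.
  apply: le_trans (VW _ _) _; first by apply/andP; split; lra.
  have Wle : W (1 - (e + r / k)) <= W (1 - e) by apply: Wmono; lra.
  rewrite mulrDr kr; lra.
- by apply: le_trans (rpw_of_le1 V k) _; lra.
Qed.

End rpw_of.

Theorem lemmaA4 (d : measure_display) (X : measurableType d) (R : realType)
  (c : X -> X -> R) (hc : is_metric c) (hdiam : forall x y, c x y <= 1)
  (hborel : borel_wrt c)
  (mu nu : probability X R) (p k d' : R)
  (hp : 1 <= p) (hk : 0 < k) (hd' : 0 < d')
  (Wbar : R -> R)
  (hW : forall alpha, 0 <= alpha <= 1 ->
     Wpa c p alpha mu nu <= Wbar alpha <= Wpa c p alpha mu nu + d') :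
  RPW c p k mu nu <= rpw_of Wbar k <= RPW c p k mu nu + 2 * d' / k.
Proof.
have p0 : 0 <= p by lra.
apply/andP; split.
  by apply: le_rpw_of => a /hW /andP[].
have Wbar_le a : 0 <= a <= 1 -> Wbar a <= Wpa c p a mu nu + d'.
  by move=> /hW /andP[].
apply: le_trans (rpw_of_le_add _ _ _ _ hk (ltW hd')
  (Wpa_mono mu nu c p p0) Wbar_le) _.
by rewrite /RPW lerD2l -mulrA ler_pMl ?divr_gt0// ler1n.
Qed.
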